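(* Let $p(g)=y^{a(g)}x^{b(g)}$ be a continuous $1$-cocycle of $G_k$ with values in $\pi/[\pi]_2$. The lifts of $p$ to $1$-cocycles in $C^1(G_k,\pi/[\pi]_3)$ are in bijection with the set of cochains $c\in C^1(G_k,\hat{\mathbb Z}(2))$ such that $Dc=-b\cup a$, via $c\mapsto(b,a)_c$, where $(b,a)_c(g)=y^{a(g)}x^{b(g)}[x,y]^{c(g)}$.
   Context: Let $k$ be either a subfield of $\mathbb C$ or the completion of a number field $F\subset\mathbb C$ at a place, with fixed embeddings $\mathbb C\supset\overline{\mathbb Q}\subseteq\overline k$; $\chi$ the cyclotomic character. $\pi=\pi_1^{et}(\mathbb P^1_{\overline k}-\{0,1,\infty\},\overrightarrow{01})\cong\langle x,y\rangle^\wedge$ (profinite free group; $x$ loop around $0$, $y$ loop around $1$) with $G_k$-action $\sigma(x)=x^{\chi(\sigma)}$, $\sigma(y)=\mathfrak f(\sigma)^{-1}y^{\chi(\sigma)}\mathfrak f(\sigma)$, $\mathfrak f:G_k\to[\pi]_2$ a cocycle. $[\pi]_n$ is the lower central series, $[u,v]=uvu^{-1}v^{-1}$, $\hat{\mathbb Z}(n)$ is $\hat{\mathbb Z}$ with action via $\chi^n$; $b,a:G_k\to\hat{\mathbb Z}(1)$. A $1$-cocycle with values in a nonabelian group $Q$ means $s(gh)=s(g)\,g(s(h))$; $C^1$ denotes continuous cochains, $D$ the differential, and $(b\cup a)(g,h)=b(g)\chi(g)a(h)$. *)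

From HB Require Import structures.
From Stdlib Require Import ProofIrrelevance FunctionalExtensionality.
From mathcomp Require Import all_boot all_order all_algebra.
From mathcomp Require Import all_classical all_reals all_analysis.
Set Implicit Arguments. Unset Strict Implicit. Unset Printing Implicit Defensive.
Import Order.TTheory GRing.Theory Num.Theory.
Local Open Scope classical_set_scope.
Local Open Scope ring_scope.

(** Zhat = lim_m Z/mZ, with moduli m = n.+2 >= 2 *)
Definition zcompat (f : forall n : nat, 'Z_(n.+2)) : Prop :=
  forall m n : nat, (m.+2 %| n.+2)%N -> ((f n : nat) %% m.+2)%N = (f m : nat).

Record zhat := Zhat { zval : forall n : nat, 'Z_(n.+2); zvalP : zcompat zval }.

Lemma zhat_eq (x y : zhat) : zval x = zval y -> x = y.
Proof.
case: x y => fx px [fy py] /= E; subst fy; congr Zhat; exact: proof_irrelevance.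
Qed.

HB.instance Definition _ := gen_eqMixin zhat.
HB.instance Definition _ := gen_choiceMixin zhat.

Lemma valZpD (k : nat) (a b : 'Z_(k.+2)) : nat_of_ord (a + b) = modn (addn a b) k.+2.
Proof. by []. Qed.
Lemma valZpM (k : nat) (a b : 'Z_(k.+2)) : nat_of_ord (a * b) = modn (muln a b) k.+2.
Proof. by []. Qed.
Lemma valZpN (k : nat) (a : 'Z_(k.+2)) : nat_of_ord (- a) = modn (subn k.+2 a) k.+2.
Proof. by []. Qed.
Lemma valZp0 (k : nat) : nat_of_ord (0 : 'Z_(k.+2)) = 0%N.
Proof. by []. Qed.
Lemma valZp1 (k : nat) : nat_of_ord (1 : 'Z_(k.+2)) = 1%N.
Proof. by []. Qed.

Section ZhatOps.

Lemma zcompat0 : zcompat (fun n => 0).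
Proof. by move=> m n _; rewrite !valZp0 mod0n. Qed.

Lemma zcompat1 : zcompat (fun n => 1).
Proof. by move=> m n _; rewrite !valZp1 modn_small. Qed.

Lemma zcompatD (x y : zhat) : zcompat (fun n => zval x n + zval y n).
Proof.
move=> m n d; rewrite !valZpD (modn_dvdm _ d) -(zvalP x d) -(zvalP y d).
by rewrite modnDm.
Qed.

Lemma zcompatM (x y : zhat) : zcompat (fun n => zval x n * zval y n).
Proof.
move=> m n d; rewrite !valZpM (modn_dvdm _ d) -(zvalP x d) -(zvalP y d).
by rewrite modnMm.
Qed.

Lemma zcompatN (x : zhat) : zcompat (fun n => - zval x n).
Proof.
move=> m n d; rewrite !valZpN (modn_dvdm _ d).
have xn := ltn_ord (zval x n); have xm := ltn_ord (zval x m).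
apply/eqP; rewrite -(eqn_modDr (zval x n)) subnK; last exact: ltnW.
rewrite -modnDmr (zvalP x d) subnK; last exact: ltnW.
by rewrite modnn; exact: d.
Qed.

Definition zzero := Zhat zcompat0.
Definition zone := Zhat zcompat1.
Definition zadd x y := Zhat (zcompatD x y).
Definition zmul x y := Zhat (zcompatM x y).
Definition zopp x := Zhat (zcompatN x).

Ltac zext := move=> *; apply: zhat_eq; apply: functional_extensionality_dep => ? /=.

Lemma zaddA : associative zadd. Proof. by zext; rewrite addrA. Qed.
Lemma zaddC : commutative zadd. Proof. by zext; rewrite addrC. Qed.
Lemma zadd0 : left_id zzero zadd. Proof. by zext; rewrite add0r. Qed.
Lemma zaddN : left_inverse zzero zopp zadd. Proof. by zext; rewrite addNr. Qed.

End ZhatOps.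

HB.instance Definition _ := GRing.isZmodule.Build zhat zaddA zaddC zadd0 zaddN.

Section ZhatRing.
Ltac zext := move=> *; apply: zhat_eq; apply: functional_extensionality_dep => ? /=.
Lemma zmulA : associative zmul. Proof. by zext; rewrite mulrA. Qed.
Lemma zmulC : commutative zmul. Proof. by zext; rewrite mulrC. Qed.
Lemma zmul1 : left_id zone zmul. Proof. by zext; rewrite mul1r. Qed.
Lemma zmulD : left_distributive zmul (+%R : zhat -> zhat -> zhat).
Proof. by zext; rewrite mulrDl. Qed.
Lemma zone_neq0 : zone != 0 :> zhat.
Proof.
apply/eqP => /(f_equal (fun x => zval x 0%N)) /= /(f_equal (@nat_of_ord _)).
by [].
Qed.
End ZhatRing.

HB.instance Definition _ :=
  GRing.Zmodule_isComNzRing.Build zhat zmulA zmulC zmul1 zmulD zone_neq0.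

Definition DZ (n : nat) : topologicalType := discrete_topology 'Z_(n.+2).
Definition zproj (x : zhat) : prod_topology DZ := zval x.
HB.instance Definition _ := isPointed.Build zhat 0.
HB.instance Definition _ := Topological.copy zhat (initial_topology zproj).
HB.instance Definition _ := Uniform.copy zhat (initial_topology zproj).


(** pi/[pi]_2 is the free abelian profinite group on x, y; its element
    y^a x^b is encoded as the pair (a, b).

    pi/[pi]_3 is the free class-2 pro-nilpotent group on x, y; every element
    is uniquely y^a x^b [x,y]^c with a b c in Zhat, encoded as (a, b, c).
    Since [x,y] is central and x y = [x,y] y x, we get
      (y^a x^b [x,y]^c) (y^a' x^b' [x,y]^c')
        = y^(a+a') x^(b+b') [x,y]^(c + c' + b a').                            *)
Definition pi2 := (zhat * zhat)%type.
Definition pi2mul (u v : pi2) : pi2 := (u.1 + v.1, u.2 + v.2).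

Definition pi3 := (zhat * zhat * zhat)%type.
Definition pi3mul (u v : pi3) : pi3 :=
  (u.1.1 + v.1.1, u.1.2 + v.1.2, u.2 + v.2 + u.1.2 * v.1.1).

Definition pi3to2 (u : pi3) : pi2 := (u.1.1, u.1.2).

(** Induced G_k-actions, for sigma with chi(sigma) = t:
    sigma(x) = x^t, sigma(y) = f(sigma)^-1 y^t f(sigma) with f(sigma) in [pi]_2.
    Modulo [pi]_2 (resp. [pi]_3) the conjugation by f(sigma) is trivial
    ([pi]_2/[pi]_3 is central in pi/[pi]_3), and sigma([x,y]) = [x^t,y^t]
    = [x,y]^(t^2) mod [pi]_3. *)
Definition pi2act (t : zhat) (u : pi2) : pi2 := (t * u.1, t * u.2).
Definition pi3act (t : zhat) (u : pi3) : pi3 := (t * u.1.1, t * u.1.2, t ^+ 2 * u.2).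

Definition cocycle1 {G Q : Type} (mulG : G -> G -> G) (mulQ : Q -> Q -> Q)
  (act : G -> Q -> Q) (s : G -> Q) : Prop :=
  forall g h, s (mulG g h) = mulQ (s g) (act g (s h)).

(** Differential of a 1-cochain with values in Zhat(n) (action via chi^n):
    (Dc)(g,h) = g.c(h) - c(gh) + c(g). *)
Definition D1 {G : Type} (mulG : G -> G -> G) (n : nat) (chi : G -> zhat)
  (c : G -> zhat) : G -> G -> zhat :=
  fun g h => chi g ^+ n * c h - c (mulG g h) + c g.

Definition cup1 {G : Type} (chi : G -> zhat) (b a : G -> zhat) : G -> G -> zhat :=
  fun g h => b g * chi g * a h.

Definition bac {G : Type} (b a c : G -> zhat) : G -> pi3 := fun g => (a g, b g, c g).

Definition topological_group (G : topologicalType) (mulG : G -> G -> G) (oneG : G)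
  (invG : G -> G) : Prop :=
  [/\ associative mulG, left_id oneG mulG, left_inverse oneG invG mulG,
      continuous (fun p : G * G => mulG p.1 p.2) & continuous invG].

Definition profinite (G : topologicalType) : Prop :=
  [/\ compact [set: G], hausdorff_space G & totally_disconnected [set: G]].

From HB Require Import structures.
From mathcomp Require Import all_boot all_order all_algebra.
From mathcomp Require Import all_classical all_reals all_analysis.
From mathcomp Require Import ring.
Import Order.TTheory GRing.Theory Num.Theory.
Local Open Scope classical_set_scope.
Local Open Scope ring_scope.

(* Writing a lift of p as y^a x^b [x,y]^c, the multiplication law of pi/[pi]_3
   shows that the cocycle condition on the first two coordinates is that of p,
   while on the third it reads c(gh) = c(g) + chi(g)^2 c(h) + b(g) chi(g) a(h),
   i.e. Dc = - b u a.  The set of lifts is therefore the image of the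
   (visibly injective) map c |-> (b,a)_c on such cochains, and continuity
   passes through the product topology. *)

Lemma subrDr_eq_opp (R : comNzRingType) (x y z w : R) :
  x - y + z = - w <-> y = z + x + w.
Proof.
split=> [E | ->]; last by ring.
have -> : y = x + z + w - (x - y + z + w) by ring.
by rewrite E; ring.
Qed.

Section LiftsOfAbelianCocycle.

Variables (G : Type) (mulG : G -> G -> G) (chi : G -> zhat) (a b : G -> zhat).

Lemma bac_cocycleE (c : G -> zhat) :
  cocycle1 mulG pi2mul (fun g => pi2act (chi g)) (fun g => (a g, b g) : pi2) ->
  cocycle1 mulG pi3mul (fun g => pi3act (chi g)) (bac b a c) <->
  D1 mulG 2 chi c = (fun g h => - cup1 chi b a g h).
Proof.
move=> p_cocycle; rewrite /cocycle1 /pi3mul /pi3act /bac /D1 /cup1 /=.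
split=> [lift_cocycle | Dc].
- apply/funext => g; apply/funext => h; apply/subrDr_eq_opp.
  by case: (lift_cocycle g h) => _ _ ->; rewrite mulrA.
- move=> g h; case: (p_cocycle g h) => -> ->.
  have /subrDr_eq_opp -> := congr1 (fun F => F g h) Dc.
  by rewrite mulrA.
Qed.

Lemma bac_inj : injective (bac b a).
Proof. by move=> c1 c2 E; apply/funext => g; have [] := congr1 (fun s => s g) E. Qed.

Lemma lift_bacE (s : G -> pi3) :
  (forall g, pi3to2 (s g) = (a g, b g)) -> s = bac b a (fun g => (s g).2).
Proof.
move=> lifts; apply/funext => g; have := lifts g.
by rewrite /bac /pi3to2; case: (s g) => -[? ?] ? [-> ->].
Qed.

End LiftsOfAbelianCocycle.

Arguments bac_cocycleE {G mulG chi a b} c.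

Lemma continuous_bac (G : topologicalType) (a b c : G -> zhat) :
  continuous (fun g => (a g, b g) : pi2) -> continuous c ->
  continuous (bac b a c).
Proof. by move=> p_cont c_cont x; exact: cvg_pair (p_cont x) (c_cont x). Qed.

Lemma continuous_pi3_comm (G : topologicalType) (s : G -> pi3) :
  continuous s -> continuous (fun g => (s g).2).
Proof. by move=> s_cont x; apply: (continuous_comp (s_cont x)); exact: cvg_snd. Qed.

Theorem corollary12p1 (G : topologicalType) (mulG : G -> G -> G) (oneG : G)
  (invG : G -> G) (chi : G -> zhat) (a b : G -> zhat) :
  topological_group mulG oneG invG ->
  profinite G ->
  continuous chi ->
  (forall g h, chi (mulG g h) = chi g * chi h) ->
  chi oneG = 1 ->
  (* p(g) = y^a(g) x^b(g) is a continuous 1-cocycle with values in pi/[pi]_2 *)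
  continuous (fun g => (a g, b g) : pi2) ->
  cocycle1 mulG pi2mul (fun g => pi2act (chi g)) (fun g => (a g, b g) : pi2) ->
  set_bij
    [set c : G -> zhat | continuous c /\
       D1 mulG 2 chi c = (fun g h => - cup1 chi b a g h)]
    [set s : G -> pi3 | [/\ continuous s,
       cocycle1 mulG pi3mul (fun g => pi3act (chi g)) s &
       forall g, pi3to2 (s g) = (a g, b g)]]
    (bac b a).
Proof.
move=> _ _ _ _ _ p_cont p_cocycle; split.
- move=> c [c_cont Dc]; split=> //; first exact: continuous_bac.
  exact/(bac_cocycleE _ p_cocycle).
- by move=> c1 c2 _ _; apply: bac_inj.
- move=> s [s_cont s_cocycle /lift_bacE s_bac].
  exists (fun g => (s g).2) => //; split; first exact: continuous_pi3_comm.
  by apply/(bac_cocycleE _ p_cocycle); rewrite -s_bac.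
Qed.
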